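(* Let $f(t)\in\mathbb{F}_2[t]$ be an irreducible polynomial with $f(t)\neq t$ that is not self-reciprocal, and let $R_f=\mathbb{F}_2[t,t^{-1},f(t)^{-1}]$. Then the only ring automorphism of $R_f$ is the identity.
   Context: The reciprocal of a polynomial $f(t)$ of degree $m$ is $t^m f(1/t)$; $f$ is self-reciprocal if it equals its reciprocal. *)

From HB Require Import structures.
From mathcomp Require Import all_boot all_order all_algebra.
From mathcomp Require Import fraction.
Set Implicit Arguments. Unset Strict Implicit. Unset Printing Implicit Defensive.
Import GRing.Theory.
Local Open Scope ring_scope.


(* The reciprocal t^m f(1/t) of a polynomial f of degree m (size f = m+1). *)
Definition reciprocal (f : {poly 'F_2}) : {poly 'F_2} :=
  \poly_(i < size f) f`_(size f - 1 - i).

Definition self_reciprocal (f : {poly 'F_2}) : Prop := reciprocal f = f.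

Definition inRf (f : {poly 'F_2}) (x : {fraction {poly 'F_2}}) : Prop :=
  exists (p : {poly 'F_2}) (a b : nat),
    x = tofrac p / tofrac ('X ^+ a * f ^+ b).

Definition is_ring_aut_Rf (f : {poly 'F_2})
    (phi : {fraction {poly 'F_2}} -> {fraction {poly 'F_2}}) : Prop :=
  (forall x, inRf f x -> inRf f (phi x)) /\
  (forall x y, inRf f x -> inRf f y -> phi (x + y) = phi x + phi y) /\
  (forall x y, inRf f x -> inRf f y -> phi (x * y) = phi x * phi y) /\
  phi 1 = 1 /\
  (forall x y, inRf f x -> inRf f y -> phi x = phi y -> x = y) /\
  (forall y, inRf f y -> exists2 x, inRf f x & phi x = y).

From HB Require Import structures.
From mathcomp Require Import all_boot all_order all_algebra.
From mathcomp Require Import fraction.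
From mathcomp Require Import zify ring.
Set Implicit Arguments. Unset Strict Implicit. Unset Printing Implicit Defensive.
Import GRing.Theory.
Local Open Scope ring_scope.

(* An automorphism phi of R_f permutes the units, which are the monomials
   t^i f^j, so phi t = t^a f^b and phi f = t^c f^d with an exponent matrix
   invertible over Z.  Write t^a f^b = A / B with coprime monomials A, B in t
   and f.  Applying phi to f gives B^m f(A/B) = B^m t^c f^d, m = deg f.  As
   f(0) and f(1) are nonzero, the left side is a polynomial with nonzero
   constant term and degree m * max(deg A, deg B); comparing orders at 0 and
   degrees determines c and d, and unimodularity then leaves either phi t = t,
   whence phi = id, or phi t = 1/t and phi f = t^-m f, which says that f is
   self-reciprocal. *)

Lemma F2_eq0_or1 (x : 'F_2) : x = 0 \/ x = 1.
Proof. by case: x => [[|[|//]] Hi]; [left|right]; apply: val_inj. Qed.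

Lemma F2_neq0 (x : 'F_2) : x != 0 -> x = 1.
Proof. by case: (F2_eq0_or1 x) => ->; rewrite ?eqxx. Qed.

Lemma F2_monic (p : {poly 'F_2}) : p != 0 -> p \is monic.
Proof. by move=> p0; apply/monicP/F2_neq0; rewrite lead_coef_eq0. Qed.

Lemma F2_poly_unit (p q : {poly 'F_2}) : p * q = 1 -> p = 1.
Proof.
move=> pq1; have : p \is a GRing.unit by apply/unitrPr; exists q.
by rewrite poly_unitE => /andP[/size_poly1P[c /F2_neq0 -> ->] _].
Qed.

Lemma F2_irredp_root (f : {poly 'F_2}) c :
  irreducible_poly f -> root f c -> f = 'X - c%:P.
Proof.
move=> firr fc; apply/esym/eqP.
rewrite -eqp_monic ?monicXsubC ?F2_monic ?(irredp_neq0 firr) //.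
by apply: (apply_irredp firr); rewrite ?size_XsubC ?dvdp_XsubCl.
Qed.

Lemma reciprocal_XsubC1 : reciprocal ('X - 1%:P : {poly 'F_2}) = 'X - 1%:P.
Proof.
rewrite /reciprocal size_XsubC; apply/polyP=> i; rewrite coef_poly.
case: i => [|[|i]] //=; rewrite !coefB !coefX !coefC //=.
all: rewrite ?subr0 ?sub0r ?subrr //; by apply/val_inj.
Qed.

Lemma irredp_root0 (f : {poly 'F_2}) :
  irreducible_poly f -> f != 'X -> ~~ root f 0.
Proof.
by move=> firr; apply: contra_neqN => /(F2_irredp_root firr) ->; rewrite subr0.
Qed.

Lemma irredp_root1 (f : {poly 'F_2}) :
  irreducible_poly f -> ~ self_reciprocal f -> ~~ root f 1.
Proof.
move=> firr fnsr; apply/negP => /(F2_irredp_root firr) f1.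
by apply: fnsr; rewrite /self_reciprocal f1 reciprocal_XsubC1.
Qed.

Lemma irredp_dvdpM (R : fieldType) (g p q : {poly R}) :
  irreducible_poly g -> g %| p * q -> (g %| p) || (g %| q).
Proof.
move=> ig; have [//|gNp] := boolP (g %| p).
by rewrite -(irreducible_poly_coprime _ ig) in gNp; rewrite Gauss_dvdpr.
Qed.

Lemma irredp_mul_split (R : fieldType) (g p q r : {poly R}) :
  irreducible_poly g -> p * q = r * g ->
  (exists2 p', p = p' * g & p' * q = r) \/ (exists q', p * q' = r).
Proof.
move=> ig pqE; have g0 := irredp_neq0 ig.
have /(irredp_dvdpM ig)/orP[/dvdpP[p' pE] | /dvdpP[q' qE]] : g %| p * q.
- by rewrite pqE dvdp_mull.
- by left; exists p' => //; apply: (mulIf g0); rewrite -pqE pE mulrAC.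
- by right; exists q'; apply: (mulIf g0); rewrite -pqE qE mulrA.
Qed.

Lemma F2_dvd_irredp_powM (g h p q : {poly 'F_2}) (N M : nat) :
  irreducible_poly g -> irreducible_poly h ->
  p * q = g ^+ N * h ^+ M -> exists i j, p = g ^+ i * h ^+ j.
Proof.
move=> ig ih; elim: N M p q => [|N IHN] M.
  elim: M => [|M IHM] p q.
    by rewrite mulr1 => /F2_poly_unit ->; exists 0%N, 0%N; rewrite mulr1.
  rewrite exprSr mulrA => /(irredp_mul_split ih)[[p' -> /IHM[i [j ->]]] | [q' /IHM//]].
  by exists i, j.+1; rewrite exprSr mulrA.
move=> p q; rewrite exprSr mulrAC.
case/(irredp_mul_split ig) => [[p' -> /IHN[i [j ->]]] | [q' /IHN//]].
by exists i.+1, j; rewrite exprSr mulrAC.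
Qed.

Lemma tofrac_inj (R : idomainType) : injective (@tofrac R).
Proof. by move=> p q /eqP; rewrite tofrac_eq => /eqP. Qed.

Lemma int_split (x : int) :
  exists i1 i2 : nat, x = i1%:Z - i2%:Z /\ (i1 = 0 \/ i2 = 0)%N.
Proof.
case: x => n; first by exists n, 0%N; split; [rewrite subr0 | right].
by exists 0%N, n.+1; split; [rewrite NegzE sub0r | left].
Qed.

Lemma int_unit (x y : int) : x * y = 1 -> x = 1 \/ x = -1.
Proof.
move=> h; have := @intUnitRing.unitzPl x y; rewrite mulrC => /(_ h).
by rewrite qualifE => /orP [] /eqP; [left|right].
Qed.

Lemma int_pm1 (x y : int) : x * y = 1 \/ x * y = -1 -> x = 1 \/ x = -1.
Proof.
case=> [/int_unit //|xy]; apply: (@int_unit x (- y)).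
by rewrite mulrN xy opprK.
Qed.

Lemma size_mul_pred (R : idomainType) (p q : {poly R}) : p != 0 -> q != 0 ->
  (size (p * q)).-1 = ((size p).-1 + (size q).-1)%N.
Proof.
by move=> p0 q0; rewrite size_mul // (polySpred p0) (polySpred q0) addSn addnS.
Qed.

Local Notation K := {fraction {poly 'F_2}}.
Local Notation t := (tofrac ('X : {poly 'F_2})).

Definition tfpow (f : {poly 'F_2}) (i j : int) : K := t ^ i * tofrac f ^ j.

Section Monomials.
Variable f : {poly 'F_2}.
Hypothesis f_root0 : ~~ root f 0.

Let f_neq0 : f != 0.
Proof. by apply: contraNneq f_root0 => ->; apply: root0. Qed.

Let t_neq0 : t != 0. Proof. by rewrite tofrac_eq0 polyX_eq0. Qed.
Let tf_neq0 : tofrac f != 0. Proof. by rewrite tofrac_eq0. Qed.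

Lemma tfpow_neq0 i j : tfpow f i j != 0.
Proof. exact: (mulf_neq0 (expfz_neq0 _ t_neq0) (expfz_neq0 _ tf_neq0)). Qed.

Lemma tfpowD i j k l : tfpow f i j * tfpow f k l = tfpow f (i + k) (j + l).
Proof. by rewrite /tfpow (expfzDr _ _ t_neq0) (expfzDr _ _ tf_neq0) mulrACA. Qed.

Lemma tfpow00 : tfpow f 0 0 = 1.
Proof. by rewrite /tfpow !expr0z mulr1. Qed.

Lemma tfpow10 : tfpow f 1 0 = t.
Proof. by rewrite /tfpow expr1z expr0z mulr1. Qed.

Lemma tfpow01 : tfpow f 0 1 = tofrac f.
Proof. by rewrite /tfpow expr1z expr0z mul1r. Qed.

Lemma tfpowNK i j : tfpow f i j * tfpow f (- i) (- j) = 1.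
Proof. by rewrite tfpowD !subrr tfpow00. Qed.

Lemma tfpowV i j : (tfpow f i j)^-1 = tfpow f (- i) (- j).
Proof. exact/mulr1_eq/tfpowNK. Qed.

Lemma t_unit : t * tfpow f (-1) 0 = 1.
Proof. by rewrite -tfpow10 tfpowNK. Qed.

Lemma tf_unit : tofrac f * tfpow f 0 (-1) = 1.
Proof. by rewrite -tfpow01 tfpowNK. Qed.

Lemma tfpowX i j (n : nat) : tfpow f i j ^+ n = tfpow f (i * n%:Z) (j * n%:Z).
Proof.
elim: n => [|n IH]; first by rewrite expr0 !mulr0 tfpow00.
by rewrite exprSr IH tfpowD -[n.+1]addn1 !PoszD !mulrDr !mulr1.
Qed.

Lemma tofrac_monom (i j : nat) : tofrac ('X ^+ i * f ^+ j) = tfpow f i j.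
Proof. by rewrite rmorphM !rmorphXn. Qed.

Lemma tfpow_frac (i1 i2 j1 j2 : nat) :
  tfpow f (i1%:Z - i2%:Z) (j1%:Z - j2%:Z) =
  tofrac ('X ^+ i1 * f ^+ j1) / tofrac ('X ^+ i2 * f ^+ j2).
Proof. by rewrite !tofrac_monom tfpowV tfpowD. Qed.

Lemma monom_neq0 (i j : nat) : 'X ^+ i * f ^+ j != 0.
Proof. by rewrite mulf_neq0 ?expf_neq0 ?polyX_eq0. Qed.

Lemma tofrac_monom_neq0 (i j : nat) : tofrac ('X ^+ i * f ^+ j) != 0.
Proof. by rewrite tofrac_eq0 monom_neq0. Qed.

Lemma root_monom0 (i j : nat) : root ('X ^+ i * f ^+ j) 0 = (0 < i)%N.
Proof.
rewrite rootM {2}/root horner_exp expf_eq0 -/(root f 0) (negPf f_root0) andbF orbF.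
by rewrite /root horner_exp hornerX expf_eq0 eqxx andbT lt0n.
Qed.

Lemma size_monom (i j : nat) :
  (size ('X ^+ i * f ^+ j)).-1 = (i + (size f).-1 * j)%N.
Proof.
by rewrite size_mul_pred ?expf_neq0 ?polyX_eq0 // size_polyXn size_exp.
Qed.

Lemma tfpow_poly (p : {poly 'F_2}) i j : ~~ root p 0 -> tofrac p = tfpow f i j ->
  i = 0 /\ ((size p).-1)%:Z = ((size f).-1)%:Z * j.
Proof.
move=> p_root0; have p0 : p != 0 by apply: contraNneq p_root0 => ->; apply: root0.
have [i1 [i2 [-> i12]]] := int_split i; have [j1 [j2 [-> _]]] := int_split j.
(* Clear the denominator, then compare orders at 0 and degrees. *)
rewrite tfpow_frac => /(congr1 ( *%R^~ (tofrac ('X ^+ i2 * f ^+ j2)))).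
rewrite (divfK (tofrac_monom_neq0 _ _)) -rmorphM => /tofrac_inj pE.
have [i10 i20] : i1 = 0%N /\ i2 = 0%N.
  have := congr1 (root^~ 0) pE; rewrite rootM (negPf p_root0) !root_monom0 /=.
  by case: i12 => ->; lia.
have := congr1 (fun r : {poly 'F_2} => (size r).-1) pE.
rewrite (size_mul_pred p0 (monom_neq0 _ _)) !size_monom i10 i20 !add0n subrr => szE.
by split => //; rewrite mulrBr -!PoszM -szE PoszD addrK.
Qed.

Lemma tfpow_inj i j k l : (1 < size f)%N ->
  tfpow f i j = tfpow f k l -> i = k /\ j = l.
Proof.
move=> f_size e.
have /tfpow_poly[] : tofrac 1 = tfpow f (i - k) (j - l).
  by rewrite tofrac1 -tfpowD e tfpowNK.
- by rewrite /root hornerC oner_neq0.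
move=> /eqP; rewrite subr_eq0 => /eqP ->; rewrite size_poly1 => /esym/eqP.
have m0 : ((size f).-1)%:Z != 0 by rewrite eqz_nat -lt0n -ltnS prednK // ltnW.
by rewrite mulf_eq0 (negPf m0) subr_eq0 => /eqP.
Qed.

End Monomials.

Lemma weighted_deg_le (dA dB m i : nat) : (i <= m)%N ->
  (dA * i + dB * (m - i) <= m * maxn dA dB)%N.
Proof.
move=> le_im; rewrite -{2}(subnKC le_im) mulnDl !(mulnC _ (maxn _ _)).
by rewrite leq_add // leq_mul2r ?leq_maxl ?leq_maxr orbT.
Qed.

Lemma weighted_deg_eq (dA dB m i : nat) : (i <= m)%N ->
  (dA * i + dB * (m - i) == m * maxn dA dB)%N =
  [|| dA == dB, (dA < dB) && (i == 0) | (dB < dA) && (i == m)]%N.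
Proof.
move=> le_im; case: ltngtP => [lt|lt|->] /=; rewrite ?orbF.
- by apply/eqP/eqP; nia.
- by apply/eqP/eqP; nia.
- by apply/eqP; nia.
Qed.

Lemma F2_coef_size (p : {poly 'F_2}) n :
  (size p <= n.+1)%N -> p`_n = (size p == n.+1)%:R.
Proof.
rewrite leq_eqVlt => /orP[/eqP sp | lt_pn]; last first.
  by rewrite (ltn_eqF lt_pn) nth_default.
rewrite sp eqxx; apply: F2_neq0.
by rewrite -[n]/(n.+1.-1) -sp -lead_coefE lead_coef_eq0 -size_poly_gt0 sp.
Qed.

Lemma size_poly_pred_eq (R : nzSemiRingType) (p : {poly R}) n :
  (size p <= n.+1)%N -> p`_n != 0 -> (size p).-1 = n.
Proof.
move=> le_pn pn0; have lt_np : (n < size p)%N.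
  by rewrite ltnNge; apply: contra pn0 => /(nth_default 0) ->.
by apply/eqP; rewrite -eqSS prednK ?(leq_ltn_trans _ lt_np) // eqn_leq le_pn.
Qed.

Lemma size_pow_mul (R : idomainType) (A B : {poly R}) (i j : nat) :
  A != 0 -> B != 0 -> size (A ^+ i * B ^+ j) = ((size A).-1 * i + (size B).-1 * j).+1.
Proof.
move=> A0 B0; rewrite -[LHS]prednK ?size_poly_gt0 ?mulf_neq0 ?expf_neq0 //.
by rewrite size_mul_pred ?expf_neq0 // !size_exp.
Qed.

Definition tofracC (R : fieldType) : {rmorphism R -> {fraction {poly R}}} :=
  @tofrac _ \o polyC.

Definition homog (R : nzRingType) (f A B : {poly R}) : {poly R} :=
  \sum_(i < size f) f`_i *: (A ^+ i * B ^+ ((size f).-1 - i)).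

Lemma horner_homog (R : fieldType) (f A B : {poly R}) : B != 0 ->
  (map_poly (tofracC R) f).[tofrac A / tofrac B] * tofrac B ^+ (size f).-1 =
  tofrac (homog f A B).
Proof.
move=> B0; have tB0 : tofrac B != 0 by rewrite tofrac_eq0.
rewrite horner_coef size_map_poly mulr_suml rmorph_sum; apply: eq_bigr => i _.
have le_im : (i <= (size f).-1)%N.
  by rewrite -ltnS (leq_trans (ltn_ord i)) // leqSpred.
rewrite coef_map -mul_polyC !rmorphM -mulrA; congr (_ * _).
rewrite -{1}(subnKC le_im) exprD mulrA expr_div_n (divfK (expf_neq0 _ tB0)).
by rewrite !rmorphXn.
Qed.

Lemma horner_tofracC_X (R : fieldType) (q : {poly R}) :
  (map_poly (tofracC R) q).[tofrac 'X] = tofrac q.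
Proof.
elim/poly_ind: q => [|q c IH]; first by rewrite !rmorph0 horner0.
by rewrite rmorphD rmorphM /= map_polyX map_polyC hornerMXaddC IH rmorphD rmorphM.
Qed.

Section Homogenization.
Variable f : {poly 'F_2}.
Hypotheses (f_root0 : ~~ root f 0) (f_root1 : ~~ root f 1).

Let f_neq0 : f != 0.
Proof. by apply: contraNneq f_root0 => ->; apply: root0. Qed.

Let size_f : size f = (size f).-1.+1.
Proof. by rewrite prednK // size_poly_gt0. Qed.

Lemma homog_root0 (A B : {poly 'F_2}) :
  ~~ (root A 0 && root B 0) -> ~~ root (homog f A B) 0.
Proof.
rewrite /root /homog horner_sum.
under eq_bigr => i _ do rewrite hornerZ hornerM !horner_exp.
have [] := F2_eq0_or1 B.[0] => ->; last first.
  under eq_bigr => i _ do rewrite expr1n mulr1.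
  by rewrite -horner_coef; case: (F2_eq0_or1 A.[0]) => ->.
have [-> | -> _] := F2_eq0_or1 A.[0]; first by rewrite eqxx.
rewrite size_f big_ord_recr big1 => [|i _] /=.
  by rewrite add0r subnn expr1n !mulr1 -lead_coefE lead_coef_eq0.
by rewrite expr0n subn_eq0 leqNgt ltn_ord mulr0 mulr0.
Qed.

Lemma coef_homog_top (A B : {poly 'F_2}) : A != 0 -> B != 0 ->
  let N := ((size f).-1 * maxn (size A).-1 (size B).-1)%N in
  (homog f A B)`_N =
  \sum_(i < size f | ((size A).-1 * i + (size B).-1 * ((size f).-1 - i) == N)%N) f`_i.
Proof.
move=> A0 B0 N; rewrite /homog coef_sum [RHS]big_mkcond /=; apply: eq_bigr => i _.
have le_im : (i <= (size f).-1)%N by rewrite -ltnS -size_f.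
rewrite coefZ (F2_coef_size (p := A ^+ i * _)) size_pow_mul
  ?ltnS ?weighted_deg_le // eqSS.
by case: eqP; rewrite ?mulr1 ?mulr0.
Qed.

Lemma size_homog_le (A B : {poly 'F_2}) : A != 0 -> B != 0 ->
  (size (homog f A B) <= ((size f).-1 * maxn (size A).-1 (size B).-1).+1)%N.
Proof.
move=> A0 B0; apply: leq_trans (size_sum _ _ _) _; apply/bigmax_leqP => i _.
apply: leq_trans (size_scale_leq _ _) _.
by rewrite size_pow_mul // ltnS weighted_deg_le // -ltnS -size_f.
Qed.

Lemma size_homog (A B : {poly 'F_2}) : A != 0 -> B != 0 ->
  (size (homog f A B)).-1 = ((size f).-1 * maxn (size A).-1 (size B).-1)%N.
Proof.
(* The top coefficient is f_0, f_m or f(1) as deg A <, > or = deg B. *)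
move=> A0 B0; apply: size_poly_pred_eq; first exact: size_homog_le.
set dA := (size A).-1; set dB := (size B).-1.
rewrite coef_homog_top // (eq_bigl (fun i : 'I_(size f) =>
  [|| dA == dB, (dA < dB) && (i == 0 :> nat)
    | (dB < dA) && (i == (size f).-1 :> nat)]%N));
  last by move=> i; rewrite weighted_deg_eq // -ltnS -size_f.
case: ltngtP => [lt|lt|eq].
- rewrite (eq_bigl (fun i : 'I_(size f) => i == 0%N :> nat)) => [|i /=].
    by rewrite big_ord1_eq size_poly_gt0 f_neq0 -horner_coef0.
  by rewrite orbF.
- rewrite (eq_bigl (fun i : 'I_(size f) => i == (size f).-1 :> nat)) => [|//].
  by rewrite big_ord1_eq ltn_predL size_poly_gt0 f_neq0 -lead_coefE lead_coef_eq0.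
- have := f_root1; rewrite /root horner_coef; apply: contra => /eqP s0.
  by apply/eqP; rewrite -[RHS]s0; apply: eq_big => [//|i _]; rewrite expr1n mulr1.
Qed.

End Homogenization.

Lemma homog_1X (f : {poly 'F_2}) : homog f 1 'X = reciprocal f.
Proof.
rewrite /homog /reciprocal poly_def (reindex_inj rev_ord_inj) /=.
apply: eq_bigr => i _; have := ltn_ord i; set n := size f => lt_in.
by rewrite expr1n mul1r; congr (f`_ _ *: 'X^_); lia.
Qed.

Lemma irredp_X (R : idomainType) : irreducible_poly ('X : {poly R}).
Proof. by have := irredp_XsubC (0 : R); rewrite subr0. Qed.

Section Localization.
Variable f : {poly 'F_2}.
Hypotheses (firr : irreducible_poly f) (f_root0 : ~~ root f 0).

Lemma inRf_tofrac p : inRf f (tofrac p).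
Proof. by exists p, 0%N, 0%N; rewrite !expr0 mulr1 tofrac1 divr1. Qed.

Lemma inRf_mul x y : inRf f x -> inRf f y -> inRf f (x * y).
Proof.
move=> [p [a [b ->]]] [q [c [d ->]]]; exists (p * q), (a + c)%N, (b + d)%N.
by rewrite mulf_div -[tofrac p * _]rmorphM !tofrac_monom // tfpowD // !PoszD.
Qed.

Lemma inRf_tfpow i j : inRf f (tfpow f i j).
Proof.
have [i1 [i2 [-> _]]] := int_split i; have [j1 [j2 [-> _]]] := int_split j.
by rewrite tfpow_frac //; exists ('X ^+ i1 * f ^+ j1), i2, j2.
Qed.

Lemma Rf_unit x y : inRf f x -> inRf f y -> x * y = 1 ->
  exists i j, x = tfpow f i j.
Proof.
move=> [p [a [b ->]]] [q [c [d ->]]].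
rewrite mulf_div -!rmorphM => /divr1_eq /tofrac_inj.
rewrite mulrACA -!exprD => /(F2_dvd_irredp_powM (irredp_X _) firr)[i [j ->]].
by exists (i%:Z - a%:Z), (j%:Z - b%:Z); rewrite tfpow_frac.
Qed.

End Localization.

(* For phi t = t^a f^b = A / B with A = t^ap f^bp, B = t^an f^bn, and
   phi f = t^c f^d, the hypotheses on c and d compare orders at 0 and degrees
   in B^m f(A/B) = t^(c + m an) f^(d + m bn) (see phi_exponents). *)
Lemma unimodular_exponents (m ap an bp bn : nat) (a b c d : int) :
  (0 < m)%N -> (ap = 0 \/ an = 0)%N -> (bp = 0 \/ bn = 0)%N ->
  a = ap%:Z - an%:Z -> b = bp%:Z - bn%:Z ->
  c + an%:Z * m%:Z = 0 -> (maxn (ap + m * bp) (an + m * bn))%:Z = d + bn%:Z * m%:Z ->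
  a * d - b * c = 1 \/ a * d - b * c = -1 ->
  (a = 1 /\ b = 0) \/ (a = -1 /\ b = 0 /\ c = - m%:Z /\ d = 1).
Proof.
move=> m0 sa sb -> -> /eqP; rewrite addr_eq0 => /eqP ->.
case: sa sb => -> [] -> dE; rewrite ?add0n ?addn0 ?muln0 ?max0n ?maxn0 in dE.
- have {dE} -> : d = an%:Z by lia.
  case=> det; first by nia.
  have an1 : an = 1%N by nia.
  have bn0 : bn = 0%N by subst; nia.
  by subst; right; lia.
- case=> det; have an1 : an = 1%N by nia.
    by subst; nia.
  have bp0 : bp = 0%N by subst; nia.
  by subst; right; lia.
- rewrite subr0 sub0r mul0r oppr0 mulr0 subr0 => det.
  have ap1 : ap = 1%N by case: (int_pm1 det); lia.
  move: det; subst ap; rewrite mul1r; case=> det.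
    have bn0 : bn = 0%N by subst; nia.
    by subst; left; lia.
  by subst; nia.
- have {dE} -> : d = (ap + m * bp)%N by lia.
  case=> det; last by nia.
  have ap1 : ap = 1%N by nia.
  have bp0 : bp = 0%N by subst; nia.
  by subst; left; lia.
Qed.

Section Automorphism.
Variable f : {poly 'F_2}.
Hypotheses (firr : irreducible_poly f) (f_root0 : ~~ root f 0) (f_root1 : ~~ root f 1).
Variable phi : K -> K.
Hypothesis phi_aut : is_ring_aut_Rf f phi.

Let phi_Rf := phi_aut.1.
Let phiD := phi_aut.2.1.
Let phiM := phi_aut.2.2.1.
Let phi1 := phi_aut.2.2.2.1.
Let phi_inj := phi_aut.2.2.2.2.1.
Let phi_surj := phi_aut.2.2.2.2.2.

Lemma phi0 : phi 0 = 0.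
Proof.
have Rf0 : inRf f 0 by rewrite -tofrac0; apply: inRf_tofrac.
by apply: (addrI (phi 0)); rewrite -phiD // !addr0.
Qed.

Lemma phi_tofracC c : phi (tofracC _ c) = tofracC _ c.
Proof. by case: (F2_eq0_or1 c) => ->; rewrite ?rmorph0 ?rmorph1 ?phi0 ?phi1. Qed.

Lemma phi_poly p : phi (tofrac p) = (map_poly (tofracC _) p).[phi t].
Proof.
elim/poly_ind: p => [|p c IH]; first by rewrite rmorph0 phi0 rmorph0 horner0.
have -> : tofrac (p * 'X + c%:P) = tofrac p * t + tofracC _ c.
  by rewrite rmorphD rmorphM.
have Rpt : inRf f (tofrac p * t) by apply: (inRf_mul f_root0); apply: inRf_tofrac.
rewrite (phiD Rpt (inRf_tofrac _ _)) (phiM (inRf_tofrac _ _) (inRf_tofrac _ _)).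
by rewrite phi_tofracC IH rmorphD rmorphM /= map_polyX map_polyC hornerMXaddC.
Qed.

Lemma phi_unit x y : inRf f x -> inRf f y -> x * y = 1 ->
  exists i j, phi x = tfpow f i j.
Proof.
move=> Rx Ry xy1; apply: (Rf_unit firr f_root0 (phi_Rf Rx) (phi_Rf Ry)).
by rewrite -phiM // xy1 phi1.
Qed.

Lemma phi_unit_preimage y y' : inRf f y -> inRf f y' -> y * y' = 1 ->
  exists i j, phi (tfpow f i j) = y.
Proof.
move=> /phi_surj[w Rw <-] /phi_surj[w' Rw' <-] ww1.
have Rf1 : inRf f 1 by rewrite -tofrac1; apply: inRf_tofrac.
have /(Rf_unit firr f_root0 Rw Rw')[i [j ->]] : w * w' = 1.
  by apply: (phi_inj (inRf_mul f_root0 Rw Rw') Rf1); rewrite phiM // ww1 phi1.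
by exists i, j.
Qed.

Lemma phi_fix_t : phi t = t -> forall x, inRf f x -> phi x = x.
Proof.
move=> phi_t x Rx; case: (Rx) => [p [n [k xE]]].
have phi_id q : phi (tofrac q) = tofrac q by rewrite phi_poly phi_t horner_tofracC_X.
have Q0 := tofrac_monom_neq0 f_root0 n k.
have := congr1 phi (divfK Q0 (tofrac p)).
rewrite -xE (phiM Rx (inRf_tofrac _ _)) !phi_id => e.
by apply: (mulIf Q0); rewrite e xE divfK.
Qed.

Section Exponents.
Variables a b c d : int.
Hypotheses (phi_t : phi t = tfpow f a b) (phi_f : phi (tofrac f) = tfpow f c d).

Lemma phi_monom (n k : nat) :
  phi (tofrac ('X ^+ n * f ^+ k)) = tfpow f (a * n%:Z + c * k%:Z) (b * n%:Z + d * k%:Z).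
Proof.
rewrite phi_poly rmorphM !rmorphXn /= map_polyX hornerM !horner_exp hornerX.
by rewrite -phi_poly phi_t phi_f !tfpowX // tfpowD.
Qed.

Lemma phi_tfpow i j : phi (tfpow f i j) = tfpow f (a * i + c * j) (b * i + d * j).
Proof.
have [i1 [i2 [-> _]]] := int_split i; have [j1 [j2 [-> _]]] := int_split j.
have Rx := inRf_tfpow f_root0 (i1%:Z - i2%:Z) (j1%:Z - j2%:Z).
rewrite tfpow_frac // in Rx *.
have := congr1 phi
  (divfK (tofrac_monom_neq0 f_root0 i2 j2) (tofrac ('X ^+ i1 * f ^+ j1))).
rewrite (phiM Rx (inRf_tofrac _ _)) !phi_monom => e.
rewrite -[LHS](mulfK (tfpow_neq0 f_root0 (a * i2 + c * j2) (b * i2 + d * j2))) e.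
by rewrite tfpowV // tfpowD //; congr tfpow; ring.
Qed.

Lemma phi_unimodular : a * d - b * c = 1 \/ a * d - b * c = -1.
Proof.
have f_size : (1 < size f)%N by case: firr.
(* The preimages of t and f give an integer inverse of the exponent matrix. *)
have [i [j]] := phi_unit_preimage (inRf_tofrac f 'X)
  (inRf_tfpow f_root0 (-1) 0) (t_unit f_root0).
rewrite phi_tfpow -(tfpow10 f) => /(tfpow_inj f_root0 f_size)[e1 e2].
have [k [l]] := phi_unit_preimage (inRf_tofrac f f)
  (inRf_tfpow f_root0 0 (-1)) (tf_unit f_root0).
rewrite phi_tfpow -(tfpow01 f) => /(tfpow_inj f_root0 f_size)[e3 e4].
apply: (@int_unit _ (i * l - j * k)).
have -> : (a * d - b * c) * (i * l - j * k) =
  (a * i + c * j) * (b * k + d * l) - (b * i + d * j) * (a * k + c * l) by ring.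
by rewrite e1 e2 e3 e4 mul0r subr0 mulr1.
Qed.

Lemma phi_exponents :
  (a = 1 /\ b = 0) \/ (a = -1 /\ b = 0 /\ c = - ((size f).-1)%:Z /\ d = 1).
Proof.
have [ap [an [ea sa]]] := int_split a; have [bp [bn [eb sb]]] := int_split b.
have m_gt0 : (0 < (size f).-1)%N by case: firr; case: (size f) => [|[|]].
have A0 := monom_neq0 f_root0 ap bp; have B0 := monom_neq0 f_root0 an bn.
have homogE : tofrac (homog f ('X ^+ ap * f ^+ bp) ('X ^+ an * f ^+ bn)) =
    tfpow f (c + an%:Z * ((size f).-1)%:Z) (d + bn%:Z * ((size f).-1)%:Z).
  rewrite -horner_homog // -tfpow_frac // -ea -eb -phi_t -phi_poly phi_f.
  by rewrite tofrac_monom // tfpowX // tfpowD.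
have homog0 : ~~ root (homog f ('X ^+ ap * f ^+ bp) ('X ^+ an * f ^+ bn)) 0.
  by apply: homog_root0 => //; rewrite !root_monom0 //; case: sa => ->; rewrite ?andbF.
have [cE degE] := tfpow_poly f_root0 homog0 homogE.
rewrite size_homog // !size_monom // PoszM in degE.
have m0 : ((size f).-1)%:Z != 0 by rewrite eqz_nat -lt0n.
exact: (unimodular_exponents m_gt0 sa sb ea eb cE (mulfI m0 degE) phi_unimodular).
Qed.

End Exponents.

Lemma phi_inv_t_reciprocal : phi t = tfpow f (-1) 0 ->
  phi (tofrac f) = tfpow f (- ((size f).-1)%:Z) 1 -> self_reciprocal f.
Proof.
move=> phi_t phi_f; apply: tofrac_inj.
rewrite -homog_1X -horner_homog ?polyX_eq0 //.
have -> : tofrac 1 / t = tfpow f (-1) 0.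
  by rewrite rmorph1 mul1r -(tfpow10 f) tfpowV // oppr0.
rewrite -phi_t -phi_poly phi_f -(tfpow10 f) tfpowX // tfpowD //.
by rewrite mul1r mul0r addNr addr0 tfpow01.
Qed.

End Automorphism.

Unset Implicit Arguments.
Theorem mainTheorem13 (f : {poly 'F_2})
  (firr : irreducible_poly f) (fX : f != 'X) (fnsr : ~ self_reciprocal f)
  (phi : {fraction {poly 'F_2}} -> {fraction {poly 'F_2}}) :
  is_ring_aut_Rf f phi -> forall x, inRf f x -> phi x = x.
Proof.
move=> phi_aut.
have f_root0 := irredp_root0 firr fX; have f_root1 := irredp_root1 firr fnsr.
have [a [b phi_t]] := phi_unit firr f_root0 phi_aut
  (inRf_tofrac f 'X) (inRf_tfpow f_root0 (-1) 0) (t_unit f_root0).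
have [c [d phi_f]] := phi_unit firr f_root0 phi_aut
  (inRf_tofrac f f) (inRf_tfpow f_root0 0 (-1)) (tf_unit f_root0).
case: (phi_exponents firr f_root0 f_root1 phi_aut phi_t phi_f).
- by case=> a1 b0; apply: (phi_fix_t f_root0 phi_aut); rewrite phi_t a1 b0 tfpow10.
- case=> a1 [b0 [cm d1]]; case: fnsr; apply: (phi_inv_t_reciprocal f_root0 phi_aut).
    by rewrite phi_t a1 b0.
  by rewrite phi_f cm d1.
Qed.
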